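(* For any utility profile $\mathbf{u}$, the game $G=(\mathcal{L},R^L,\mathbf{u})$ has the following properties: (1) If $\mathbf{b}$ is a PNE of $G$ then $|W(\mathbf{b})|\in\{1,m\}$. Moreover, $|W(\mathbf{b})|=m$ if and only if $\mathbf{b}$ is the trivial ballot vector and all voters rank $c_1$ first. (2) If $\mathbf{b}$ is a PNE of $G$ then there exists at most one voter $i$ with $b_i\neq\bot$. (3) $G$ admits a PNE if and only if all voters rank $c_1$ first (in which case $c_1$ is the unique PNE winner) or there exists a candidate $c_j$ with $j>1$ such that (i) $\mathrm{sc}(c_j,\mathbf{a})>0$ and (ii) for every $k<j$, all voters prefer $c_j$ to $c_k$. If such a candidate exists, he is unique, and wins in all PNE of $G$.
   Context: Let $C=\{c_1,\dots,c_m\}$ be a set of candidates and $N=\{1,\dots,n\}$ a set of voters. Each voter $i$ has an injective utility function $u_i:C\to\mathbb{N}$; $\mathbf{u}=(u_1,\dots,u_n)$. Voter $i$'s preference $\succ_i$ is $c\succ_i c'$ iff $u_i(c)>u_i(c')$; $a_i$ is $i$'s top candidate and $\mathbf{a}=(a_1,\dots,a_n)$ is the truthful ballot vector. A ballot vector is $\mathbf{b}=(b_1,\dots,b_n)$ with $b_i\in C\cup\{\bot\}$ ($\bot$ = abstain); it is trivial if all $b_i=\bot$. $(\mathbf{b}_{-i},b')$ denotes $\mathbf{b}$ with $b_i$ replaced by $b'$. The score is $\mathrm{sc}(c,\mathbf{b})=|\{i:b_i=c\}|$, $M(\mathbf{b})=\max_{c}\mathrm{sc}(c,\mathbf{b})$,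 and $W(\mathbf{b})=\{c:\mathrm{sc}(c,\mathbf{b})=M(\mathbf{b})\}$ (so $W(\mathbf{b})=C$ for the trivial ballot). Under the lexicographic tie-breaking rule $R^L$, the winner is the $c_j\in W(\mathbf{b})$ with smallest index $j$. Fix $0<\varepsilon<\min\{1/m,1/n\}$. In the lazy setting $\mathcal{L}$, if $c$ is the winner of $\mathbf{b}$, voter $i$'s utility is $U_i(\mathbf{b})=u_i(c)$ if $b_i\in C$ and $u_i(c)+\varepsilon$ if $b_i=\bot$. The game $(\mathcal{L},R^L,\mathbf{u})$ has players $N$, action set $C\cup\{\bot\}$ for each. A ballot vector $\mathbf{b}$ is a pure Nash equilibrium (PNE) if $U_i(\mathbf{b})\ge U_i(\mathbf{b}_{-i},b')$ for all $i\in N$ and all $b'\in C\cup\{\bot\}$. *)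

From HB Require Import structures.
From mathcomp Require Import all_boot all_order all_algebra.
Set Implicit Arguments. Unset Strict Implicit. Unset Printing Implicit Defensive.
Import Order.TTheory GRing.Theory Num.Theory.

(* Voters are 'I_n, candidates are 'I_m (candidate c_{j+1} of the paper is the
   ordinal j, so c_1 is the ordinal with value 0).  A ballot of a voter is an
   [option 'I_m]: [None] is abstention (bottom). *)
Definition ballot (n m : nat) := 'I_n -> option 'I_m.

Definition sc n m (b : ballot n m) (c : 'I_m) : nat := #|[set i | b i == Some c]|.

Definition Msc n m (b : ballot n m) : nat := \max_(c : 'I_m) sc b c.

Definition Wset n m (b : ballot n m) : {set 'I_m} := [set c | sc b c == Msc b].

(* lexicographic tie-breaking R^L: the element of W(b) of smallest index
   (always [Some _] when m > 0). *)
Definition winnerL n m (b : ballot n m) : option 'I_m :=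
  [pick c in Wset b | [forall c' in Wset b, (c <= c')%N]].

Definition dev n m (b : ballot n m) (i : 'I_n) (x : option 'I_m) : ballot n m :=
  fun j => if j == i then x else b j.

Definition Ulazy (R : numDomainType) n m (eps : R) (u : 'I_n -> 'I_m -> nat)
    (b : ballot n m) (i : 'I_n) : R :=
  ((if winnerL b is Some c then (u i c)%:R else 0) + (if b i is None then eps else 0))%R.

Definition is_PNE (R : numDomainType) n m (eps : R) (u : 'I_n -> 'I_m -> nat)
    (b : ballot n m) : Prop :=
  forall (i : 'I_n) (x : option 'I_m), (Ulazy eps u (dev b i x) i <= Ulazy eps u b i)%R.

Definition prefers n m (u : 'I_n -> 'I_m -> nat) (i : 'I_n) (c c' : 'I_m) : bool :=
  (u i c' < u i c)%N.

Definition truthful n m (u : 'I_n -> 'I_m -> nat) : ballot n m :=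
  fun i => [pick c | [forall c', (u i c' <= u i c)%N]].

Definition all_c1_first n m (u : 'I_n -> 'I_m -> nat) : Prop :=
  forall (i : 'I_n) (c c' : 'I_m), val c = 0%N -> c' != c -> prefers u i c c'.

Definition cond3 n m (u : 'I_n -> 'I_m -> nat) (j : 'I_m) : Prop :=
  [/\ (0 < val j)%N, (0 < sc (truthful u) j)%N &
      forall (k : 'I_m), (val k < val j)%N -> forall i : 'I_n, prefers u i j k].

(* In a pure Nash equilibrium every cast vote goes to the winner, since a voter
   supporting a loser gains eps by abstaining; and at most one voter votes, since
   otherwise one of them could abstain without changing the winner.  So an
   equilibrium is either the empty ballot, which is stable iff every voter ranks
   c_1 first, or a single vote for some c_j.  The latter is stable iff c_j is its
   voter's top choice, strictly better for him than c_1 (which wins if he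
   abstains), and every other voter prefers c_j to each c_k with k < j (a vote
   for such c_k would make it win by lexicographic tie-breaking).  As eps < 1,
   eps only decides between equal utilities. *)

From mathcomp Require Import all_boot all_order all_algebra.
From mathcomp Require Import lra.
Import Order.TTheory GRing.Theory Num.Theory.
Set Implicit Arguments. Unset Strict Implicit.

Section Scores.
Variables n m : nat.
Implicit Types (b : ballot n m) (c w : 'I_m) (i k : 'I_n).

Lemma sc_eq0 b c : (forall k, b k != Some c) -> sc b c = 0%N.
Proof.
move=> nvote; apply/eqP; rewrite cards_eq0; apply/eqP/setP=> k.
by rewrite !inE (negbTE (nvote k)).
Qed.

Lemma sc_gt0 b c k : b k = Some c -> (0 < sc b c)%N.
Proof. by move=> bk; rewrite /sc card_gt0; apply/set0Pn; exists k; rewrite inE bk. Qed.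

Lemma sc_le1 b c i : (forall k, b k = Some c -> k = i) -> (sc b c <= 1)%N.
Proof.
move=> only_i; rewrite /sc -(cards1 i); apply: subset_leq_card; apply/subsetP=> k.
by rewrite !inE => /eqP/only_i ->.
Qed.

Lemma sc_sub b b' c :
  (forall k, b' k = Some c -> b k = Some c) -> (sc b' c <= sc b c)%N.
Proof.
move=> sub; apply: subset_leq_card; apply/subsetP=> k.
by rewrite !inE => /eqP/sub ->.
Qed.

Lemma Msc_ge b c : (sc b c <= Msc b)%N.
Proof. by rewrite /Msc (bigD1 c) //= leq_maxl. Qed.

Lemma Msc_eq b w : (forall c, sc b c <= sc b w)%N -> Msc b = sc b w.
Proof.
move=> wmax; apply/eqP; rewrite eqn_leq Msc_ge andbT.
by apply/bigmax_leqP => c _; exact: wmax.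
Qed.

Lemma winnerL_SomeP b w :
  winnerL b = Some w <->
  (forall c, sc b c <= sc b w)%N /\ (forall c, (c < w)%N -> sc b c < sc b w)%N.
Proof.
rewrite /winnerL; split.
  case: pickP => // x /andP[xW /forallP xmin] [<-].
  rewrite inE in xW; have xmax c : (sc b c <= sc b x)%N by rewrite (eqP xW) Msc_ge.
  split=> // c cx; rewrite ltn_neqAle xmax andbT; apply/negP=> /eqP scx.
  have /(implyP (xmin c)) : c \in Wset b by rewrite inE scx.
  by rewrite leqNgt cx.
move=> [wmax wfirst].
have inW c : (c \in Wset b) = (sc b c == sc b w) by rewrite inE (Msc_eq wmax).
have le_w c : c \in Wset b -> (w <= c)%N.
  by rewrite inW leqNgt => /eqP scw; apply/negP => /wfirst; rewrite scw ltnn.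
case: pickP => [x /andP[xW /forallP xmin] | none].
  congr Some; apply/val_inj/eqP; rewrite eqn_leq le_w //.
  by rewrite (implyP (xmin w)) // inW.
move: (none w); rewrite inW eqxx /= => /negP[].
by apply/forall_inP => c /le_w.
Qed.

Lemma winnerL_exists b : (0 < m)%N -> exists w, winnerL b = Some w.
Proof.
move=> hm; pose top (j : nat) := [exists c, (val c == j) && (sc b c == Msc b)].
have : exists j, top j.
  case: (@arg_maxnP _ (Ordinal hm) predT (sc b) isT) => c _ cmax.
  exists (val c); apply/existsP; exists c.
  by rewrite (@Msc_eq b c (fun c' => cmax c' isT)) !eqxx.
case/ex_minnP => j /existsP[w /andP[/eqP <- /eqP Mw]] wmin.
exists w; apply/winnerL_SomeP; split=> [c|c cw]; first by rewrite Mw Msc_ge.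
rewrite ltn_neqAle Mw Msc_ge andbT; apply/negP => /eqP scM.
have /wmin : top (val c) by apply/existsP; exists c; rewrite scM !eqxx.
by rewrite leqNgt cw.
Qed.

Lemma winnerL_abstain b c0 :
  (forall k, b k = None) -> val c0 = 0%N -> winnerL b = Some c0.
Proof.
move=> abstain c00; have sc0 c : sc b c = 0%N by apply: sc_eq0 => k; rewrite abstain.
by apply/winnerL_SomeP; split=> c; rewrite !sc0 // c00.
Qed.

Lemma winnerL_unanimous b k w :
  b k = Some w -> (forall l c, b l = Some c -> c = w) -> winnerL b = Some w.
Proof.
move=> bk unan; have sc_w := sc_gt0 bk.
have sc0 c : c != w -> sc b c = 0%N.
  move=> cw; apply: sc_eq0 => l; apply/eqP => /unan cw'.
  by rewrite cw' eqxx in cw.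
apply/winnerL_SomeP; split=> [c|c cw].
  by have [->//|cw] := eqVneq c w; rewrite sc0.
by rewrite sc0 // neq_ltn cw.
Qed.

Lemma winnerL_single b i w :
  b i = Some w -> (forall k, k != i -> b k = None) -> winnerL b = Some w.
Proof.
move=> bi others; apply: (winnerL_unanimous bi) => l c.
by have [->|li] := eqVneq l i; [rewrite bi => -[] | rewrite others].
Qed.

Lemma winnerL_pair b i k j c :
  b i = Some j -> b k = Some c -> k != i ->
  (forall l, l != i -> l != k -> b l = None) ->
  winnerL b = Some (if (c < j)%N then c else j).
Proof.
move=> bi bk ki others.
wlog le_jc : i k j c bi bk ki others / (j <= c)%N.
  move=> gen; have [le_jc|cj] := leqP j c.
    by have := gen _ _ _ _ bi bk ki others le_jc; rewrite ltnNge le_jc.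
  have := gen _ _ _ _ bk bi _ _ (ltnW cj); rewrite ltnNge (ltnW cj); apply.
    by rewrite eq_sym.
  by move=> l li lk; rewrite others.
rewrite ltnNge le_jc /=; have sc_j := sc_gt0 bi.
have sc0 c' : c' != j -> c' != c -> sc b c' = 0%N.
  move=> c'j c'c; apply: sc_eq0 => l.
  have [->|li] := eqVneq l i; first by rewrite bi (inj_eq Some_inj) eq_sym.
  have [->|lk] := eqVneq l k; first by rewrite bk (inj_eq Some_inj) eq_sym.
  by rewrite others.
have sc_c : (sc b c <= sc b j)%N.
  have [->//|cj] := eqVneq c j; apply: leq_trans sc_j; apply: (sc_le1 (i := k)) => l.
  have [->|li] := eqVneq l i; first by rewrite bi => -[jc]; rewrite jc eqxx in cj.
  by have [//|lk] := eqVneq l k; rewrite others.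
apply/winnerL_SomeP; split=> [c'|c' c'j].
  have [->//|c'j] := eqVneq c' j; have [->//|c'c] := eqVneq c' c.
  by rewrite sc0.
have c'c : c' != c by rewrite neq_ltn (leq_trans c'j le_jc).
by rewrite sc0 // neq_ltn c'j.
Qed.

Lemma Wset_abstain b : (forall k, b k = None) -> Wset b = setT.
Proof.
move=> abstain; have sc0 c : sc b c = 0%N by apply: sc_eq0 => k; rewrite abstain.
by apply/setP => c; rewrite !inE /Msc big1 // sc0.
Qed.

Lemma Wset_single b i w :
  b i = Some w -> (forall k, k != i -> b k = None) -> Wset b = [set w].
Proof.
move=> bi others; have /winnerL_SomeP[wmax wfirst] := winnerL_single bi others.
apply/setP => c; rewrite !inE (Msc_eq wmax); have [->|cw] := eqVneq c w; first by rewrite eqxx.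
apply/negbTE; rewrite neq_ltn; apply/orP; left.
have sc0 : sc b c = 0%N.
  apply: sc_eq0 => k; have [->|ki] := eqVneq k i; last by rewrite others.
  by rewrite bi (inj_eq Some_inj) eq_sym.
by rewrite sc0 (sc_gt0 bi).
Qed.

End Scores.

Lemma dev_self n m (b : ballot n m) i x : dev b i x i = x.
Proof. by rewrite /dev eqxx. Qed.

Lemma dev_other n m (b : ballot n m) i x k : k != i -> dev b i x k = b k.
Proof. by rewrite /dev => /negbTE ->. Qed.

Section LoneVoterDeviations.
Variables (n m : nat) (b : ballot n m) (i : 'I_n).
Hypothesis others : forall k, k != i -> b k = None.

Lemma winnerL_dev_vote c : winnerL (dev b i (Some c)) = Some c.
Proof. by apply: (winnerL_single (dev_self _ _ _)) => k ki; rewrite dev_other // others. Qed.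

Lemma winnerL_dev_abstain c0 : val c0 = 0%N -> winnerL (dev b i None) = Some c0.
Proof.
move=> c00; apply: winnerL_abstain c00 => k.
by have [->|ki] := eqVneq k i; rewrite ?dev_self // dev_other // others.
Qed.

Lemma winnerL_dev_join w l c : b i = Some w -> l != i ->
  winnerL (dev b l (Some c)) = Some (if (c < w)%N then c else w).
Proof.
move=> bi li; apply: (winnerL_pair (i := i) (k := l)) => //.
- by rewrite dev_other // eq_sym.
- exact: dev_self.
- by move=> l' l'i l'l; rewrite dev_other // others.
Qed.

End LoneVoterDeviations.

Section EpsilonPerturbation.
Variables (R : realFieldType) (eps : R).
Local Open Scope ring_scope.

Lemma ler_natDeps (a a' : nat) :
  0 < eps -> eps < 1 -> (a%:R <= a'%:R + eps :> R) = (a <= a')%N.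
Proof.
move=> e0 e1; apply/idP/idP => [le | ]; last by rewrite -(ler_nat R) => le; lra.
rewrite leqNgt; apply/negP; rewrite -(ler_nat R) -nat1r => lt; lra.
Qed.

Lemma ler_natepsD (a a' : nat) :
  0 < eps -> eps < 1 -> (a%:R + eps <= a'%:R :> R) = (a < a')%N.
Proof.
move=> e0 e1; apply/idP/idP => [le | ]; last by rewrite -(ler_nat R) -nat1r => lt; lra.
rewrite ltnNge; apply/negP; rewrite -(ler_nat R) => ge; lra.
Qed.

End EpsilonPerturbation.

Section Preferences.
Variables (n m : nat) (u : 'I_n -> 'I_m -> nat).
Hypothesis hu : forall i, injective (u i).

Lemma truthfulP i w : truthful u i = Some w <-> forall c, (u i c <= u i w)%N.
Proof.
rewrite /truthful; split; first by case: pickP => // x /forallP top [<-].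
move=> top; case: pickP => [x /forallP xtop | none].
  by congr Some; apply: (@hu i x w); apply/eqP; rewrite eqn_leq top xtop.
by have := none w; rewrite /= (introT forallP top).
Qed.

Lemma prefers_of_le i c c' : c' != c -> (u i c' <= u i c)%N -> prefers u i c c'.
Proof.
by move=> c'c le; rewrite /prefers ltn_neqAle le andbT; apply: contraNneq c'c => /hu ->.
Qed.

Lemma cond3_uniq j j' : cond3 u j -> cond3 u j' -> j' = j.
Proof.
have earlier_voted_loses (a c : 'I_m) : cond3 u a -> cond3 u c -> ~ (a < c)%N.
  move=> [_ + _] [_ _ pref] ac; rewrite /sc card_gt0 => /set0Pn[i].
  rewrite inE => /eqP /truthfulP /(_ c); rewrite leqNgt.
  by have := pref a ac i; rewrite /prefers => ->.
move=> cj cj'; apply: val_inj.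
case: (ltngtP (val j') (val j)) => // lt.
  by case: (earlier_voted_loses _ _ cj' cj).
by case: (earlier_voted_loses _ _ cj cj').
Qed.

Lemma c1_first_not_cond3 (i : 'I_n) j : all_c1_first u -> ~ cond3 u j.
Proof.
move=> c1_first [j0 _ pref].
have [c1 c10] : {c1 : 'I_m | val c1 = 0%N} by exists (Ordinal (ltn_trans j0 (ltn_ord j))).
have j_c1 : j != c1 by apply: contraTneq j0 => ->; rewrite c10.
have := c1_first i c1 j c10 j_c1; rewrite /prefers ltnNge ltnW //.
by apply: pref; rewrite c10.
Qed.

End Preferences.

Section Game.
Variables (R : realFieldType) (n m : nat) (eps : R) (u : 'I_n -> 'I_m -> nat).
Hypotheses (hm : (0 < m)%N) (hu : forall i, injective (u i)).
Hypotheses (heps0 : (0 < eps)%R) (heps1 : (eps < 1)%R).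
Implicit Types (b : ballot n m) (c w : 'I_m) (i k l : 'I_n).
Local Open Scope ring_scope.

Lemma Ulazy_winner b i w : winnerL b = Some w ->
  Ulazy eps u b i = (u i w)%:R + (if b i is None then eps else 0).
Proof. by rewrite /Ulazy => ->. Qed.

Lemma pne_dev b i x w w' : is_PNE eps u b ->
  winnerL b = Some w -> winnerL (dev b i x) = Some w' ->
  (u i w')%:R + (if x is None then eps else 0) <=
  (u i w)%:R + (if b i is None then eps else 0).
Proof.
move=> pne bw dw; have := pne i x.
by rewrite (Ulazy_winner _ dw) (Ulazy_winner _ bw) dev_self.
Qed.

Lemma pne_vote_winner b w k c :
  is_PNE eps u b -> winnerL b = Some w -> b k = Some c -> c = w.
Proof.
move=> pne bw bk; apply/eqP; apply: contraT => cw.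
have /winnerL_SomeP[wmax wfirst] := bw.
have sc_le c' : (sc (dev b k None) c' <= sc b c')%N.
  by apply: sc_sub => l; rewrite /dev; case: ifP.
have sc_w : sc (dev b k None) w = sc b w.
  apply/eqP; rewrite eqn_leq sc_le; apply: sc_sub => l bl.
  have [lk|lk] := eqVneq l k; last by rewrite dev_other.
  by move: bl; rewrite lk bk => -[cw']; rewrite cw' eqxx in cw.
have dw : winnerL (dev b k None) = Some w.
  apply/winnerL_SomeP; split=> [c'|c' c'w]; rewrite sc_w.
    exact: leq_trans (sc_le c') (wmax c').
  exact: leq_ltn_trans (sc_le c') (wfirst c' c'w).
by have := pne_dev pne bw dw; rewrite bk addr0 gerDl leNgt heps0.
Qed.

Lemma pne_one_voter b i k w w' :
  is_PNE eps u b -> b i = Some w -> b k = Some w' -> k = i.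
Proof.
move=> pne bi bk; apply/eqP; apply: contraT => ki.
have [v bv] := winnerL_exists b hm.
have votes_v := pne_vote_winner pne bv.
have dv : winnerL (dev b i None) = Some v.
  apply: (@winnerL_unanimous _ _ _ k); first by rewrite dev_other // bk (votes_v _ _ bk).
  move=> l c; have [->|li] := eqVneq l i; first by rewrite dev_self.
  by rewrite dev_other //; apply: votes_v.
by have := pne_dev pne bv dv; rewrite bi addr0 gerDl leNgt heps0.
Qed.

Lemma pne_shape b : is_PNE eps u b ->
  (forall k, b k = None) \/
  exists i w, b i = Some w /\ forall k, k != i -> b k = None.
Proof.
move=> pne; case: (pickP (fun k => b k != None)) => [i | abstain]; last first.
  by left=> k; apply/eqP/negbFE/abstain.
case bi: (b i) => [w|//] _; right; exists i, w; split=> // k ki.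
by case bk: (b k) => [w'|//]; rewrite (pne_one_voter pne bi bk) eqxx in ki.
Qed.

Lemma pne_abstain_c1_first b :
  is_PNE eps u b -> (forall k, b k = None) -> all_c1_first u.
Proof.
move=> pne abstain i c c' c0 c'c; apply: prefers_of_le => //.
have dc' := winnerL_dev_vote (i := i) (fun k _ => abstain k) c'.
have := pne_dev pne (winnerL_abstain abstain c0) dc'.
by rewrite abstain addr0 ler_natDeps.
Qed.

Section SingleVoterBallot.
Variables (b : ballot n m) (i : 'I_n) (w : 'I_m).
Hypotheses (pne : is_PNE eps u b) (bi : b i = Some w).
Hypothesis others : forall k, k != i -> b k = None.

Let bw : winnerL b = Some w := winnerL_single bi others.

Lemma single_pne_top c : (u i c <= u i w)%N.
Proof. by have := pne_dev pne bw (winnerL_dev_vote others c); rewrite bi !addr0 ler_nat. Qed.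

Lemma single_pne_above_c1 c0 : val c0 = 0%N -> (u i c0 < u i w)%N.
Proof.
move=> c00; have := pne_dev pne bw (winnerL_dev_abstain others c00).
by rewrite bi addr0 ler_natepsD.
Qed.

Lemma single_pne_others_prefer l c : l != i -> (c < w)%N -> prefers u l w c.
Proof.
move=> li cw; have := winnerL_dev_join others c bi li; rewrite cw => dc.
have := pne_dev pne bw dc; rewrite others // addr0 ler_natDeps // => le.
by apply: (prefers_of_le hu _ le); rewrite neq_ltn cw.
Qed.

Lemma single_pne_cond3 : cond3 u w.
Proof.
have w0 : (0 < val w)%N.
  by rewrite lt0n; apply/eqP => w0; have := single_pne_above_c1 w0; rewrite ltnn.
split=> //; first by apply: (sc_gt0 (k := i)); apply/(truthfulP hu)/single_pne_top.
move=> c cw l; have [->|li] := eqVneq l i; last exact: single_pne_others_prefer.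
by apply: (prefers_of_le hu _ (single_pne_top c)); rewrite neq_ltn cw.
Qed.

Lemma single_voter_stable x :
  (forall c, u i c <= u i w)%N -> (forall c0 : 'I_m, val c0 = 0%N -> u i c0 < u i w)%N ->
  Ulazy eps u (dev b i x) i <= Ulazy eps u b i.
Proof.
move=> top above_c1; rewrite (Ulazy_winner _ bw) bi addr0; case: x => [c|].
  by rewrite (Ulazy_winner _ (winnerL_dev_vote others c)) dev_self addr0 ler_nat.
have dc0 := winnerL_dev_abstain others (erefl : val (Ordinal hm) = 0%N).
by rewrite (Ulazy_winner _ dc0) dev_self ler_natepsD // above_c1.
Qed.

Lemma abstainer_stable l x : l != i -> (forall c, (c < w)%N -> prefers u l w c) ->
  Ulazy eps u (dev b l x) l <= Ulazy eps u b l.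
Proof.
move=> li pref; rewrite (Ulazy_winner _ bw) others //; case: x => [c|].
  rewrite (Ulazy_winner _ (winnerL_dev_join others c bi li)) dev_self addr0 ler_natDeps //.
  by case: ifP => // cw; apply: ltnW (pref c cw).
have dw : winnerL (dev b l None) = Some w.
  apply: (winnerL_single (i := i)) => [|k ki]; first by rewrite dev_other // eq_sym.
  by have [->|kl] := eqVneq k l; rewrite ?dev_self // dev_other // others.
by rewrite (Ulazy_winner _ dw) dev_self.
Qed.

Lemma cond3_single_pne : cond3 u w -> truthful u i = Some w -> is_PNE eps u b.
Proof.
move=> [w0 _ pref] /(truthfulP hu) top k x.
have [->|ki] := eqVneq k i; last by apply: abstainer_stable => // c cw; apply: pref.
by apply: single_voter_stable => // c0 c00; apply: pref; rewrite c00.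
Qed.

End SingleVoterBallot.

Lemma c1_first_pne : all_c1_first u -> is_PNE eps u (fun _ => None).
Proof.
move=> c1_first i x; pose c1 : 'I_m := Ordinal hm; have c10 : val c1 = 0%N by [].
have abstain k : k != i -> (fun _ => None) k = None :> option 'I_m by [].
rewrite (Ulazy_winner _ (winnerL_abstain (fun _ => erefl) c10)).
case: x => [c|]; last by rewrite (Ulazy_winner _ (winnerL_dev_abstain abstain c10)) dev_self.
rewrite (Ulazy_winner _ (winnerL_dev_vote abstain c)) dev_self addr0 ler_natDeps //.
by have [->//|cc1] := eqVneq c c1; apply: ltnW (c1_first i c1 c c10 cc1).
Qed.

Lemma cond3_pne j : cond3 u j -> exists b : ballot n m, is_PNE eps u b.
Proof.
move=> cj; have [_ + _] := cj; rewrite /sc card_gt0 => /set0Pn[i].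
rewrite inE => /eqP ai; exists (fun k => if k == i then Some j else None).
by apply: (cond3_single_pne (w := j) (i := i) _ _ cj ai) => [|k /negbTE ->]; rewrite ?eqxx.
Qed.

Lemma pne_card_Wset b : is_PNE eps u b ->
  (#|Wset b| = 1%N \/ #|Wset b| = m) /\
  (#|Wset b| = m <-> (forall i, b i = None) /\ all_c1_first u).
Proof.
move=> pne; case: (pne_shape pne) => [abstain | [i [w [bi others]]]].
  have cardW : #|Wset b| = m by rewrite Wset_abstain // cardsT card_ord.
  by split; [right | split=> // _; split=> //; apply: pne_abstain_c1_first pne abstain].
rewrite (Wset_single bi others) cards1; split; first by left.
split=> [m1 | [abstain _]]; last by rewrite abstain in bi.
have [w0 _ _] := single_pne_cond3 pne bi others.
by have := ltn_ord w; rewrite -[X in (_ < X)%N]m1 ltnS leqNgt w0.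
Qed.

Lemma pne_voters_le1 b : is_PNE eps u b -> (#|[set i | b i != None]| <= 1)%N.
Proof.
move=> pne; case: (pne_shape pne) => [abstain | [i [w [bi others]]]].
  by rewrite (_ : [set i | _] = set0) ?cards0 //; apply/setP => k; rewrite !inE abstain.
rewrite -(cards1 i); apply: subset_leq_card; apply/subsetP => k.
by rewrite !inE; have [//|ki] := eqVneq k i; rewrite others.
Qed.

Lemma pne_exists_iff :
  (exists b : ballot n m, is_PNE eps u b) <-> all_c1_first u \/ exists j, cond3 u j.
Proof.
split=> [[b pne] | [c1_first | [j cj]]]; last by apply: cond3_pne cj.
  case: (pne_shape pne) => [abstain | [i [w [bi others]]]].
    by left; apply: pne_abstain_c1_first pne abstain.
  by right; exists w; apply: single_pne_cond3 pne bi others.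
by exists (fun _ => None); apply: c1_first_pne.
Qed.

Lemma c1_first_pne_winner b :
  all_c1_first u -> is_PNE eps u b -> omap val (winnerL b) = Some 0%N.
Proof.
move=> c1_first pne; case: (pne_shape pne) => [abstain | [i [w [bi others]]]].
  by rewrite (winnerL_abstain (c0 := Ordinal hm) abstain).
by case: (c1_first_not_cond3 i c1_first (single_pne_cond3 pne bi others)).
Qed.

Lemma cond3_pne_winner (i0 : 'I_n) j b :
  cond3 u j -> is_PNE eps u b -> winnerL b = Some j.
Proof.
move=> cj pne; case: (pne_shape pne) => [abstain | [i [w [bi others]]]].
  by case: (c1_first_not_cond3 i0 (pne_abstain_c1_first pne abstain) cj).
by rewrite (winnerL_single bi others) (cond3_uniq hu cj (single_pne_cond3 pne bi others)).
Qed.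

End Game.

Theorem theorem1 (R : realFieldType) (n m : nat) (eps : R)
  (u : 'I_n -> 'I_m -> nat)
  (hn : (0 < n)%N) (hm : (0 < m)%N)
  (hu : forall i : 'I_n, injective (u i))
  (heps0 : (0 < eps)%R) (hepsm : (eps < 1 / m%:R)%R) (hepsn : (eps < 1 / n%:R)%R) :
  (* (1) *)
  (forall b : ballot n m, is_PNE eps u b ->
     (#|Wset b| = 1%N \/ #|Wset b| = m) /\
     (#|Wset b| = m <-> (forall i, b i = None) /\ all_c1_first u)) /\
  (* (2) *)
  (forall b : ballot n m, is_PNE eps u b -> (#|[set i | b i != None]| <= 1)%N) /\
  (* (3) *)
  ((exists b : ballot n m, is_PNE eps u b) <->
     all_c1_first u \/ exists j : 'I_m, cond3 u j) /\
  (all_c1_first u ->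
     forall b : ballot n m, is_PNE eps u b -> omap val (winnerL b) = Some 0%N) /\
  (forall j : 'I_m, cond3 u j ->
     (forall j' : 'I_m, cond3 u j' -> j' = j) /\
     (forall b : ballot n m, is_PNE eps u b -> winnerL b = Some j)).
Proof.
have heps1 : (eps < 1)%R.
  by apply: lt_le_trans hepsm _; rewrite ler_pdivrMr ?ltr0n // mul1r ler1n.
split; first by move=> b; apply: pne_card_Wset.
split; first by move=> b; apply: pne_voters_le1.
split; first exact: pne_exists_iff.
split; first by move=> c1_first b; apply: c1_first_pne_winner.
move=> j cj; split=> [j' cj' | b]; first exact: cond3_uniq cj cj'.
exact: cond3_pne_winner (Ordinal hn) _ _ cj.
Qed.
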